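(* Let $G_{\mathcal C}(A)$ be a two-player zero-sum complex game with $A=(a_{ij})\in\mathbb{C}^{m\times n}$ and strategy arguments $\alpha_0,\beta_0\in(0,\tfrac{\pi}{2})$. Then $G_{\mathcal C}(A)$ has a complex Nash equilibrium $(z^0,w^0)$ in which both $z^0$ and $w^0$ are equalizing strategies if and only if both of the following systems have at least one solution: $$\text{(I)}\quad \sum_{i=1}^m\overline{z_i}\,a_{ij}=\eta\ (j=1,\dots,n),\qquad \sum_{i=1}^m\overline{z_i}=1,\qquad \overline{z_i}=0\text{ or }|\arg\overline{z_i}|\le\alpha_0\ (i=1,\dots,m),$$ in unknowns $z\in\mathbb{C}^m$, $\eta\in\mathbb{C}$; $$\text{(II)}\quad \sum_{j=1}^n a_{ij}w_j=\theta\ (i=1,\dots,m),\qquad \sum_{j=1}^n w_j=1,\qquad w_j=0\text{ or }|\arg w_j|\le\beta_0\ (j=1,\dots,n),$$ in unknowns $w\in\mathbb{C}^n$, $\theta\in\mathbb{C}$. Moreover, if (I) and (II) have solutions, then $\mathrm{Re}(\eta)=\mathrm{Re}(\theta)=v_A$, the value of the game.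
   Context: For $\gamma\in(0,\tfrac{\pi}{2})$ and $p\ge 1$ let $S^p_\gamma=\{z\in\mathbb{C}^p:\ \text{for each }k,\ z_k=0\text{ or }|\arg z_k|\le\gamma,\ \sum_{k=1}^p z_k=1\}$ ($\arg$ the principal argument in $(-\pi,\pi]$). Its extreme points (''pure strategies'') are $d^1,\dots,d^{p^2}$, where $d^k=e^k$ (standard basis vector) for $k\le p$, and $d^{p+1},\dots,d^{p^2}$ are the $p(p-1)$ vectors having exactly two nonzero coordinates, one equal to $\tfrac12+bi$ and another equal to $\tfrac12-bi$, with $b=\tfrac12\tan\gamma$. The two-player zero-sum complex game $G_{\mathcal C}(A)$: player I chooses $z\in S^m_{\alpha_0}$, player II chooses $w\in S^n_{\beta_0}$, player I receives $\mathrm{Re}(z^*Aw)$ and player II receives $-\mathrm{Re}(z^*Aw)$ ($z^*$ the conjugate transpose). Pure strategies: $d^i$, $i\in\mathcal I=\{1,\dots,m^2\}$, extreme points of $S^m_{\alpha_0}$; $d^j$, $j\in\mathcal J=\{1,\dots,n^2\}$, extreme points of $S^n_{\beta_0}$. A strategy $z\in S^m_{\alpha_0}$ of player I is equalizing with equalizing constant $c\in\mathbb{R}$ if $\mathrm{Re}(z^*Ad^j)=c$ for all $j\in\mathcal J$; a strategy $w\in S^n_{\beta_0}$ of player II is equalizing with equalizing constant $c\in\mathbb{R}$ if $\mathrm{Re}((d^i)^*Aw)=c$ for all $i\in\mathcal I$. A pair $(z^0,w^0)\in S^m_{\alpha_0}\times S^n_{\beta_0}$ is a complex Nash equilibrium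 if $\mathrm{Re}(z^*Aw^0)\le\mathrm{Re}((z^0)^*Aw^0)\le\mathrm{Re}((z^0)^*Aw)$ for all $z\in S^m_{\alpha_0}$, $w\in S^n_{\beta_0}$; the value is $v_A=\mathrm{Re}((z^0)^*Aw^0)$. *)

From Stdlib Require Import Reals.
From Coquelicot Require Import Coquelicot.
Open Scope R_scope.

(* Principal argument of a complex number, with values in (-PI, PI];
   Carg 0 = 0 (never used: the strategy conditions treat 0 separately). *)
Definition Carg (z : C) : R :=
  let x := Re z in let y := Im z in
  match Rlt_dec 0 x with
  | left _ => atan (y / x)
  | right _ =>
    match Rlt_dec x 0 with
    | left _ => match Rle_dec 0 y with
                | left _ => atan (y / x) + PI
                | right _ => atan (y / x) - PI
                end
    | right _ => match Rlt_dec 0 y with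
                 | left _ => PI / 2
                 | right _ => match Rlt_dec y 0 with
                              | left _ => - (PI / 2)
                              | right _ => 0
                              end
                 end
    end
  end.

Fixpoint csum (n : nat) (f : nat -> C) : C :=
  match n with
  | O => RtoC 0
  | S k => Cplus (csum k f) (f k)
  end.

(* Vectors of C^p are represented as functions nat -> C, only the
   coordinates 0..p-1 being meaningful; matrices as nat -> nat -> C. *)

Definition arg_ok (gamma : R) (c : C) : Prop :=
  c = RtoC 0 \/ Rabs (Carg c) <= gamma.

Definition S_set (p : nat) (gamma : R) (z : nat -> C) : Prop :=
  (forall k, (k < p)%nat -> arg_ok gamma (z k)) /\ csum p z = RtoC 1.

(* Pure strategies (extreme points) d of S^p_gamma:
   standard basis vectors e^k, and vectors with exactly two nonzero
   coordinates, 1/2 + b i at k and 1/2 - b i at l (k <> l), b = tan(gamma)/2. *)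
Definition pure_strategy (p : nat) (gamma : R) (d : nat -> C) : Prop :=
  (exists k, (k < p)%nat /\
     forall t, (t < p)%nat -> d t = (if Nat.eqb t k then RtoC 1 else RtoC 0))
  \/
  (exists k l, (k < p)%nat /\ (l < p)%nat /\ k <> l /\
     forall t, (t < p)%nat ->
       d t = (if Nat.eqb t k then (1/2, tan gamma / 2)
              else if Nat.eqb t l then (1/2, - (tan gamma / 2))
              else RtoC 0)).

Definition payoff (m n : nat) (A : nat -> nat -> C) (z w : nat -> C) : R :=
  Re (csum m (fun i => Cmult (Cconj (z i)) (csum n (fun j => Cmult (A i j) (w j))))).

Definition equalizing_I (m n : nat) (alpha0 beta0 : R) (A : nat -> nat -> C)
  (z : nat -> C) : Prop :=
  S_set m alpha0 z /\
  exists c : R, forall d, pure_strategy n beta0 d -> payoff m n A z d = c.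

Definition equalizing_II (m n : nat) (alpha0 beta0 : R) (A : nat -> nat -> C)
  (w : nat -> C) : Prop :=
  S_set n beta0 w /\
  exists c : R, forall d, pure_strategy m alpha0 d -> payoff m n A d w = c.

Definition complex_NE (m n : nat) (alpha0 beta0 : R) (A : nat -> nat -> C)
  (z0 w0 : nat -> C) : Prop :=
  S_set m alpha0 z0 /\ S_set n beta0 w0 /\
  (forall z, S_set m alpha0 z -> payoff m n A z w0 <= payoff m n A z0 w0) /\
  (forall w, S_set n beta0 w -> payoff m n A z0 w0 <= payoff m n A z0 w).

Definition system_I (m n : nat) (alpha0 : R) (A : nat -> nat -> C)
  (z : nat -> C) (eta : C) : Prop :=
  (forall j, (j < n)%nat -> csum m (fun i => Cmult (Cconj (z i)) (A i j)) = eta) /\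
  csum m (fun i => Cconj (z i)) = RtoC 1 /\
  (forall i, (i < m)%nat -> arg_ok alpha0 (Cconj (z i))).

Definition system_II (m n : nat) (beta0 : R) (A : nat -> nat -> C)
  (w : nat -> C) (theta : C) : Prop :=
  (forall i, (i < m)%nat -> csum n (fun j => Cmult (A i j) (w j)) = theta) /\
  csum n w = RtoC 1 /\
  (forall j, (j < n)%nat -> arg_ok beta0 (w j)).

(* Both systems say that a strategy makes one linear form constant: system (I) that the
   column form  u_j = sum_i conj(z_i) a_ij  equals eta, system (II) that the row form
   v_i = sum_j a_ij w_j  equals theta.  Against any w with sum_j w_j = 1 such a z earns
   exactly Re eta, and symmetrically for w; so solutions of (I) and (II) are equalizing
   strategies forming a saddle point, and they pin down the value of every equilibrium.
   Conversely, an equalizing z gives Re u_j = c on the pure strategies e^j, and on the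
   pure strategy with 1/2 + b i at j and 1/2 - b i at 0 it gives
   c = Re u_j / 2 + Re u_0 / 2 - b (Im u_j - Im u_0), so u_j = u_0 because b > 0. *)
From Stdlib Require Import Reals Lra Lia.
From Coquelicot Require Import Coquelicot.
Open Scope R_scope.

Lemma csum_ext n (f g : nat -> C) :
  (forall k, (k < n)%nat -> f k = g k) -> csum n f = csum n g.
Proof.
  induction n as [|n IH]; intros Hfg; simpl; [reflexivity|].
  rewrite IH by (intros; apply Hfg; lia); rewrite Hfg by lia; reflexivity.
Qed.

Lemma csum_plus n (f g : nat -> C) :
  csum n (fun k => (f k + g k)%C) = (csum n f + csum n g)%C.
Proof. induction n as [|n IH]; simpl; [ring|rewrite IH; ring]. Qed.

Lemma csum_mult_l n (c : C) (f : nat -> C) :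
  csum n (fun k => (c * f k)%C) = (c * csum n f)%C.
Proof. induction n as [|n IH]; simpl; [ring|rewrite IH; ring]. Qed.

Lemma csum_mult_r n (c : C) (f : nat -> C) :
  csum n (fun k => (f k * c)%C) = (csum n f * c)%C.
Proof. induction n as [|n IH]; simpl; [ring|rewrite IH; ring]. Qed.

Lemma csum_conj n (f : nat -> C) : csum n (fun k => Cconj (f k)) = Cconj (csum n f).
Proof.
  induction n as [|n IH]; simpl.
  - apply injective_projections; simpl; ring.
  - rewrite IH, Cplus_conj; reflexivity.
Qed.

Lemma csum_swap m n (F : nat -> nat -> C) :
  csum m (fun i => csum n (fun j => F i j)) = csum n (fun j => csum m (fun i => F i j)).
Proof.
  induction m as [|m IH]; simpl.
  - induction n as [|n IHn]; simpl; [reflexivity|rewrite <- IHn; ring].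
  - rewrite IH, <- csum_plus; reflexivity.
Qed.

Lemma csum_const_mult p (u w : nat -> C) (a : C) :
  (forall k, (k < p)%nat -> u k = a) -> csum p (fun k => (u k * w k)%C) = (a * csum p w)%C.
Proof.
  intros Hu; rewrite <- csum_mult_l; apply csum_ext; intros k Hk; rewrite Hu by exact Hk;
    reflexivity.
Qed.

Lemma csum_indicator p k (a : C) :
  (k < p)%nat -> csum p (fun t => if Nat.eqb t k then a else RtoC 0) = a.
Proof.
  induction p as [|p IH]; intros Hk; [lia|simpl].
  destruct (Nat.eqb_spec p k) as [->|Hpk].
  - rewrite (csum_ext k _ (fun _ => RtoC 0)).
    + enough (Hzero : csum k (fun _ => RtoC 0) = RtoC 0) by (rewrite Hzero; ring).
      clear; induction k as [|k IH]; simpl; [reflexivity|rewrite IH; ring].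
    + intros t Ht; destruct (Nat.eqb_spec t k); [lia|reflexivity].
  - rewrite IH by lia; ring.
Qed.

Lemma csum_two_points p k l (a b : C) (g : nat -> C) :
  (k < p)%nat -> (l < p)%nat -> k <> l ->
  (forall t, (t < p)%nat ->
     g t = if Nat.eqb t k then a else if Nat.eqb t l then b else RtoC 0) ->
  csum p g = (a + b)%C.
Proof.
  intros Hk Hl Hkl Hg.
  rewrite (csum_ext p _ (fun t => (if Nat.eqb t k then a else RtoC 0)
                                 + (if Nat.eqb t l then b else RtoC 0))%C).
  - rewrite csum_plus, !csum_indicator by assumption; reflexivity.
  - intros t Ht; rewrite Hg by exact Ht.
    destruct (Nat.eqb_spec t k), (Nat.eqb_spec t l); subst; try lia; ring.
Qed.

Lemma Rabs_Carg_conj (c : C) : Rabs (Carg (Cconj c)) = Rabs (Carg c).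
Proof.
  destruct c as [x y]; unfold Carg, Cconj, Re, Im; simpl.
  destruct (Req_dec y 0) as [->|Hy]; [rewrite Ropp_0; reflexivity|].
  assert (Hopp : x <> 0 -> atan (- y / x) = - atan (y / x)).
  { intros Hx; rewrite <- atan_opp; f_equal; field; exact Hx. }
  destruct (Rlt_dec 0 x); [rewrite Hopp by lra; apply Rabs_Ropp|].
  destruct (Rlt_dec x 0).
  - rewrite Hopp by lra.
    destruct (Rle_dec 0 (- y)), (Rle_dec 0 y); try lra;
      rewrite <- Rabs_Ropp; f_equal; ring.
  - destruct (Rlt_dec 0 (- y)), (Rlt_dec 0 y), (Rlt_dec (- y) 0), (Rlt_dec y 0);
      try lra; rewrite <- Rabs_Ropp; f_equal; ring.
Qed.

Lemma arg_ok_conj gamma (c : C) : arg_ok gamma (Cconj c) <-> arg_ok gamma c.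
Proof.
  unfold arg_ok; rewrite Rabs_Carg_conj; split; intros [H|H]; auto; left.
  - rewrite <- (Cconj_conj c), H; apply injective_projections; simpl; ring.
  - rewrite H; apply injective_projections; simpl; ring.
Qed.

Lemma csum_pure_strategy p gamma (d : nat -> C) : pure_strategy p gamma d -> csum p d = RtoC 1.
Proof.
  intros [[k [Hk Hd]]|[k [l [Hk [Hl [Hkl Hd]]]]]].
  - rewrite (csum_ext p _ _ Hd); apply csum_indicator, Hk.
  - rewrite (csum_two_points p k l _ _ d Hk Hl Hkl Hd).
    apply injective_projections; simpl; field.
Qed.

Lemma pure_strategy_pairing_const p gamma (u : nat -> C) (c : R) :
  0 < gamma < PI / 2 ->
  (forall d, pure_strategy p gamma d -> Re (csum p (fun t => (u t * d t)%C)) = c) ->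
  forall j, (j < p)%nat -> u j = u 0%nat.
Proof.
  intros Hgamma Hu j Hj.
  assert (Hre : forall k, (k < p)%nat -> Re (u k) = c).
  { intros k Hk; rewrite <- (Hu (fun t => if Nat.eqb t k then RtoC 1 else RtoC 0)).
    - f_equal; rewrite <- (csum_indicator p k (u k)) by exact Hk.
      apply csum_ext; intros t _; destruct (Nat.eqb_spec t k); subst; ring.
    - left; exists k; split; [exact Hk|reflexivity]. }
  destruct (Nat.eq_dec j 0) as [->|Hj0]; [reflexivity|].
  set (b := tan gamma / 2).
  assert (Hb : 0 < b) by (unfold b; pose proof (tan_gt_0 gamma); lra).
  assert (Hpair : Re (Cplus (Cmult (u j) (1/2, b)) (Cmult (u 0%nat) (1/2, - b))) = c).
  { rewrite <- (Hu (fun t => if Nat.eqb t j then (1/2, b)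
                             else if Nat.eqb t 0 then (1/2, - b) else RtoC 0)).
    - f_equal; symmetry; apply (csum_two_points p j 0); try lia.
      intros t _; destruct (Nat.eqb_spec t j), (Nat.eqb_spec t 0); subst; try lia; ring.
    - right; exists j, 0%nat; repeat split; try lia; reflexivity. }
  pose proof (Hre j Hj) as Hj'; pose proof (Hre 0%nat ltac:(lia)) as H0.
  revert Hpair Hj' H0; destruct (u j) as [x1 y1], (u 0%nat) as [x2 y2]; simpl; intros.
  assert (Hy : y1 = y2) by nra.
  f_equal; lra.
Qed.

Section Payoff.

Variables (m n : nat) (A : nat -> nat -> C).

Definition col_form (z : nat -> C) (j : nat) : C :=
  csum m (fun i => (Cconj (z i) * A i j)%C).

Definition row_form (w : nat -> C) (i : nat) : C :=
  csum n (fun j => (A i j * w j)%C).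

Lemma payoff_col_form z w :
  payoff m n A z w = Re (csum n (fun j => (col_form z j * w j)%C)).
Proof.
  unfold payoff, col_form; f_equal.
  rewrite (csum_ext m _ (fun i => csum n (fun j => Cconj (z i) * A i j * w j)%C)).
  - rewrite csum_swap; apply csum_ext; intros j _; rewrite <- csum_mult_r.
    apply csum_ext; intros; ring.
  - intros i _; rewrite <- csum_mult_l; apply csum_ext; intros; ring.
Qed.

Lemma payoff_row_form z w :
  payoff m n A z w = Re (csum m (fun i => (Cconj (row_form w i) * z i)%C)).
Proof.
  unfold payoff; rewrite <- re_conj, <- csum_conj; f_equal.
  apply csum_ext; intros i _; rewrite Cmult_conj, Cconj_conj; fold (row_form w i); ring.
Qed.

Lemma payoff_system_I alpha0 z eta w :
  system_I m n alpha0 A z eta -> csum n w = RtoC 1 -> payoff m n A z w = Re eta.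
Proof.
  intros [Hcol _] Hw; rewrite payoff_col_form, (csum_const_mult n _ _ eta Hcol), Hw.
  f_equal; ring.
Qed.

Lemma payoff_system_II beta0 w theta z :
  system_II m n beta0 A w theta -> csum m z = RtoC 1 -> payoff m n A z w = Re theta.
Proof.
  intros [Hrow _] Hz; rewrite payoff_row_form.
  rewrite (csum_const_mult m _ _ (Cconj theta)), Hz.
  - rewrite <- re_conj; f_equal; apply injective_projections; simpl; ring.
  - intros i Hi; unfold row_form; rewrite Hrow by exact Hi; reflexivity.
Qed.

Lemma system_I_strategy alpha0 z eta :
  system_I m n alpha0 A z eta -> S_set m alpha0 z.
Proof.
  intros [_ [Hsum Hok]]; split.
  - intros k Hk; apply arg_ok_conj, Hok, Hk.
  - rewrite <- (Cconj_conj (csum m z)), <- csum_conj, Hsum.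
    apply injective_projections; simpl; ring.
Qed.

Lemma system_II_strategy beta0 w theta :
  system_II m n beta0 A w theta -> S_set n beta0 w.
Proof. intros [_ [Hsum Hok]]; split; assumption. Qed.

Lemma system_I_equalizing alpha0 beta0 z eta :
  system_I m n alpha0 A z eta -> equalizing_I m n alpha0 beta0 A z.
Proof.
  intros HI; split; [exact (system_I_strategy _ _ _ HI)|].
  exists (Re eta); intros d Hd; apply (payoff_system_I _ _ _ _ HI).
  exact (csum_pure_strategy _ _ _ Hd).
Qed.

Lemma system_II_equalizing alpha0 beta0 w theta :
  system_II m n beta0 A w theta -> equalizing_II m n alpha0 beta0 A w.
Proof.
  intros HII; split; [exact (system_II_strategy _ _ _ HII)|].
  exists (Re theta); intros d Hd; apply (payoff_system_II _ _ _ _ HII).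
  exact (csum_pure_strategy _ _ _ Hd).
Qed.

Lemma equalizing_I_system alpha0 beta0 z :
  0 < beta0 < PI / 2 -> equalizing_I m n alpha0 beta0 A z ->
  system_I m n alpha0 A z (col_form z 0).
Proof.
  intros Hb [[Hok Hsum] [c Hc]]; split; [|split].
  - apply (pure_strategy_pairing_const n beta0 (col_form z) c Hb).
    intros d Hd; rewrite <- payoff_col_form; exact (Hc d Hd).
  - rewrite csum_conj, Hsum; apply injective_projections; simpl; ring.
  - intros i Hi; apply arg_ok_conj, Hok, Hi.
Qed.

Lemma equalizing_II_system alpha0 beta0 w :
  0 < alpha0 < PI / 2 -> equalizing_II m n alpha0 beta0 A w ->
  system_II m n beta0 A w (row_form w 0).
Proof.
  intros Ha [[Hok Hsum] [c Hc]]; split; [|split; assumption].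
  intros i Hi; fold (row_form w i).
  rewrite <- (Cconj_conj (row_form w i)), <- (Cconj_conj (row_form w 0)); f_equal.
  refine (pure_strategy_pairing_const m alpha0 (fun t => Cconj (row_form w t)) c Ha _ i Hi).
  intros d Hd; rewrite <- payoff_row_form; exact (Hc d Hd).
Qed.

Section Systems.

Variables (alpha0 beta0 : R) (z w : nat -> C) (eta theta : C).
Hypotheses (HI : system_I m n alpha0 A z eta) (HII : system_II m n beta0 A w theta).

Lemma systems_Re_eq : Re eta = Re theta.
Proof.
  rewrite <- (payoff_system_I _ _ _ w HI), <- (payoff_system_II _ _ _ z HII);
    [reflexivity| apply (system_I_strategy _ _ _ HI) | apply (system_II_strategy _ _ _ HII)].
Qed.

Lemma systems_complex_NE : complex_NE m n alpha0 beta0 A z w.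
Proof.
  pose proof (system_I_strategy _ _ _ HI) as Hz; pose proof (system_II_strategy _ _ _ HII) as Hw.
  pose proof (payoff_system_I _ _ _ w HI (proj2 Hw)) as Hzw.
  split; [exact Hz|split; [exact Hw|split]].
  - intros z' Hz'; rewrite (payoff_system_II _ _ _ z' HII (proj2 Hz')), Hzw, systems_Re_eq.
    apply Rle_refl.
  - intros w' Hw'; rewrite (payoff_system_I _ _ _ w' HI (proj2 Hw')), Hzw; apply Rle_refl.
Qed.

Lemma systems_value z0 w0 :
  complex_NE m n alpha0 beta0 A z0 w0 ->
  Re eta = payoff m n A z0 w0 /\ Re theta = payoff m n A z0 w0.
Proof.
  intros [Hz0 [Hw0 [Hmax Hmin]]].
  pose proof (Hmax z (system_I_strategy _ _ _ HI)) as Hlow.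
  pose proof (Hmin w (system_II_strategy _ _ _ HII)) as Hup.
  rewrite (payoff_system_I _ _ _ w0 HI (proj2 Hw0)) in Hlow.
  rewrite (payoff_system_II _ _ _ z0 HII (proj2 Hz0)) in Hup.
  pose proof systems_Re_eq; split; lra.
Qed.

End Systems.

End Payoff.

Theorem theorem7p5 (m n : nat) (A : nat -> nat -> C) (alpha0 beta0 : R)
  (Ha : 0 < alpha0 < PI / 2) (Hb : 0 < beta0 < PI / 2) :
  ((exists z0 w0, complex_NE m n alpha0 beta0 A z0 w0 /\
      equalizing_I m n alpha0 beta0 A z0 /\ equalizing_II m n alpha0 beta0 A w0)
   <->
   ((exists z eta, system_I m n alpha0 A z eta) /\
    (exists w theta, system_II m n beta0 A w theta)))
  /\
  (forall z eta w theta,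
     system_I m n alpha0 A z eta -> system_II m n beta0 A w theta ->
     forall z0 w0, complex_NE m n alpha0 beta0 A z0 w0 ->
       Re eta = payoff m n A z0 w0 /\ Re theta = payoff m n A z0 w0).
Proof.
  split; [split|].
  - intros [z0 [w0 [_ [Hz0 Hw0]]]]; split.
    + exists z0, (col_form m A z0 0); exact (equalizing_I_system _ _ _ _ _ _ Hb Hz0).
    + exists w0, (row_form n A w0 0); exact (equalizing_II_system _ _ _ _ _ _ Ha Hw0).
  - intros [[z [eta HI]] [w [theta HII]]]; exists z, w; split; [|split].
    + exact (systems_complex_NE _ _ _ _ _ _ _ _ _ HI HII).
    + exact (system_I_equalizing _ _ _ _ beta0 _ _ HI).
    + exact (system_II_equalizing _ _ _ alpha0 _ _ _ HII).
  - intros z eta w theta HI HII; exact (systems_value _ _ _ _ _ _ _ _ _ HI HII).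
Qed.
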